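(* Let $U,V$ be independent Bernoulli random variables with means $p,q\in(0,1]$. Suppose $X,Y$ are real random variables with finite second moments such that $X\perp\!\!\!\perp V\mid U$ and $Y\perp\!\!\!\perp U\mid V$. Then \[{\rm Cov}(UX,VY)=pq\cdot{\rm Cov}(X,Y\mid U=V=1).\]
   Context: $X\perp\!\!\!\perp V\mid U$ denotes conditional independence of $X$ and $V$ given $U$. ${\rm Cov}(X,Y\mid U=V=1)$ is the covariance of $X$ and $Y$ under the conditional law given the event $\{U=V=1\}$. *)

From HB Require Import structures.
From mathcomp Require Import all_boot all_order all_algebra.
From mathcomp Require Import all_classical all_reals all_analysis.
Set Implicit Arguments. Unset Strict Implicit. Unset Printing Implicit Defensive.
Import Order.TTheory GRing.Theory Num.Theory.
Local Open Scope classical_set_scope.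
Local Open Scope ring_scope.

Definition indep_rv {d} {T : measurableType d} {R : realType}
  (P : probability T R) (U V : T -> R) : Prop :=
  forall A B : set R, measurable A -> measurable B ->
    P (U @^-1` A `&` V @^-1` B) = (P (U @^-1` A) * P (V @^-1` B))%E.

Definition bernoulli_rv {d} {T : measurableType d} {R : realType}
  (P : probability T R) (U : T -> R) (p : R) : Prop :=
  [/\ measurable_fun setT U,
      P [set t | U t = 0 \/ U t = 1] = 1%E
    & P [set t | U t = 1] = p%:E].

(* Conditional independence of X and V given a discrete random variable U:
   for every value u, and all Borel A, B,
   P(X in A, V in B | U = u) = P(X in A | U = u) P(V in B | U = u),
   written in multiplied-out form (trivial when P(U = u) = 0). *)
Definition cond_indep_discrete {d} {T : measurableType d} {R : realType}
  (P : probability T R) (X V U : T -> R) : Prop :=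
  forall (u : R) (A B : set R), measurable A -> measurable B ->
    (P (X @^-1` A `&` V @^-1` B `&` [set t | U t = u]) * P [set t | U t = u])%E
    = (P (X @^-1` A `&` [set t | U t = u]) * P (V @^-1` B `&` [set t | U t = u]))%E.

Definition cond_expectation {d} {T : measurableType d} {R : realType}
  (P : probability T R) (E : set T) (X : T -> R) : \bar R :=
  ((fine (P E))^-1%:E * \int[P]_(w in E) (X w)%:E)%E.

Definition cond_covariance {d} {T : measurableType d} {R : realType}
  (P : probability T R) (E : set T) (X Y : T -> R) : \bar R :=
  (cond_expectation P E (X \* Y)%R
   - cond_expectation P E X * cond_expectation P E Y)%E.

From HB Require Import structures.
From mathcomp Require Import all_boot all_order all_algebra.
From mathcomp Require Import all_classical all_reals all_analysis.
From mathcomp Require Import measurable_realfun ring.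
Set Implicit Arguments. Unset Strict Implicit. Unset Printing Implicit Defensive.
Import Order.TTheory GRing.Theory Num.Theory.
Local Open Scope classical_set_scope.
Local Open Scope ring_scope.

(* Almost surely U and V are the indicators of {U = 1} and {V = 1}, so with
   E = {U = V = 1}, of probability pq by independence,
   Cov(UX, VY) = E[XY; E] - E[X; U = 1] E[Y; V = 1].
   Conditional independence of X and V given U means that the law of X
   restricted to E is q times its law restricted to {U = 1}; integrating the
   identity function against these laws gives E[X; U = 1] = p E[X | E], and
   symmetrically E[Y; V = 1] = q E[Y | E].  Substituting, the covariance is
   pq (E[XY | E] - E[X | E] E[Y | E]). *)

Section integral_mrestr.
Local Open Scope ereal_scope.
Context d (T : measurableType d) (R : realType).
Variables (m : {measure set T -> \bar R}) (F : set T) (mF : measurable F).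
Import HBNNSimple.

Let integral_mrestr_nnsfun (h : {nnsfun T >-> R}) :
  \int[mrestr m mF]_x (h x)%:E = \int[m]_(x in F) (h x)%:E.
Proof.
under [LHS]eq_integral do rewrite fimfunE -fsumEFin//.
under [RHS]eq_integral do rewrite fimfunE -fsumEFin//.
rewrite !ge0_integral_fsum//; last 4 first.
- by move=> r; exact/measurable_EFinP/measurableT_comp.
- by move=> r x _; rewrite EFinM nnfun_muleindic_ge0.
- by move=> r; exact/measurable_EFinP/measurableT_comp.
- by move=> r x _; rewrite EFinM nnfun_muleindic_ge0.
apply: eq_fsbigr => r _.
by rewrite !integralZl_indic_nnsfun// !integral_indic//= /mrestr setIT.
Qed.

Lemma ge0_integral_mrestr (f : T -> \bar R) : measurable_fun setT f ->
    (forall x, 0 <= f x) ->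
  \int[mrestr m mF]_x f x = \int[m]_(x in F) f x.
Proof.
move=> mf f0; pose f_ := nnsfun_approx measurableT mf.
have approx (mu : {measure set T -> \bar R}) D : measurable D ->
    \int[mu]_(x in D) f x = limn (fun n => \int[mu]_(x in D) (f_ n x)%:E).
  move=> mD; rewrite -monotone_convergence//=.
  - apply: eq_integral => x _; apply/esym/cvg_lim => //.
    exact: cvg_nnsfun_approx.
  - by move=> n; exact/measurable_EFinP/measurable_funTS.
  - by move=> n x _; rewrite lee_fin.
  - by move=> x _ a b ab; rewrite lee_fin; exact/lefP/nd_nnsfun_approx.
rewrite !approx//; congr (limn _); apply/funext => n.
exact: integral_mrestr_nnsfun.
Qed.

End integral_mrestr.

Section integral_scaled_laws.
Local Open Scope ereal_scope.
Context d (T : measurableType d) (R : realType).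
Variables (m : {measure set T -> \bar R}) (F G : set T) (X : T -> R).
Variables (a b : {nonneg R}).
Hypotheses (mF : measurable F) (mG : measurable G) (mX : measurable_fun setT X).
Hypothesis scaled_laws : forall A, measurable A ->
  a%:num%:E * m (X @^-1` A `&` F) = b%:num%:E * m (X @^-1` A `&` G).

Lemma ge0_integral_scaled_laws (f : R -> \bar R) :
    measurable_fun setT f -> (forall y, 0 <= f y) ->
  a%:num%:E * \int[m]_(x in F) f (X x) = b%:num%:E * \int[m]_(x in G) f (X x).
Proof.
move=> mf f0.
have restr_law D (mD : measurable D) :
    \int[m]_(x in D) f (X x) = \int[pushforward (mrestr m mD) X]_y f y.
  rewrite [RHS]ge0_integral_pushforward// preimage_setT ge0_integral_mrestr//.
  - exact: measurableT_comp.
  - by move=> x; exact: f0.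
rewrite (restr_law F mF) (restr_law G mG) -!ge0_integral_mscale//.
by apply: eq_measure_integral => A mA _; exact: scaled_laws.
Qed.

Lemma integral_scaled_laws :
    m.-integrable F (EFin \o X) -> m.-integrable G (EFin \o X) ->
  a%:num%:E * \int[m]_(x in F) (X x)%:E = b%:num%:E * \int[m]_(x in G) (X x)%:E.
Proof.
move=> iF iG; rewrite integralE [in RHS]integralE.
have fin_posF := integrable_fin_num mF (integrable_funepos mF iF).
have fin_posG := integrable_fin_num mG (integrable_funepos mG iG).
rewrite muleBr ?fin_num_adde_defr// [in RHS]muleBr ?fin_num_adde_defr//.
congr (_ - _).
- under eq_integral do rewrite funeposE.
  under [in RHS]eq_integral do rewrite funeposE.
  apply: (ge0_integral_scaled_laws (f := fun y => maxe y%:E 0)) => [|y].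
  + exact: measurable_maxe.
  + by rewrite le_max lexx orbT.
- under eq_integral do rewrite funenegE.
  under [in RHS]eq_integral do rewrite funenegE.
  apply: (ge0_integral_scaled_laws (f := fun y => maxe (- y%:E) 0)) => [|y].
  + by apply: measurable_maxe => //; exact: measurableT_comp.
  + by rewrite le_max lexx orbT.
Qed.

End integral_scaled_laws.

Section conditioning_discrete.
Local Open Scope ereal_scope.
Context d (T : measurableType d) (R : realType) (P : probability T R).

Lemma measurable_level_set (U : T -> R) (u : R) :
  measurable_fun setT U -> measurable [set t | U t = u].
Proof. by move=> mU; have := mU measurableT _ (measurable_set1 u); rewrite setTI. Qed.

Lemma integral_cond_expectation (E : set T) (X : T -> R) :
  measurable E -> P E != 0 ->
  \int[P]_(t in E) (X t)%:E = P E * cond_expectation P E X.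
Proof.
move=> mE PE0; have fPE := fin_num_measure P _ mE.
rewrite /cond_expectation muleA -{1}(fineK fPE) -EFinM mulfV ?mul1e//.
by rewrite fine_eq0.
Qed.

Lemma cond_expectation_fin_num (E : set T) (X : T -> R) :
  measurable E -> P.-integrable setT (EFin \o X) -> cond_expectation P E X \is a fin_num.
Proof. by move=> mE iX; rewrite fin_numM// (integrable_fin_num mE)// (integrableS _ _ _ iX). Qed.

Lemma cond_indep_discrete_integral (X V U : T -> R) (u v : R) :
    measurable_fun setT U -> measurable_fun setT V ->
    P.-integrable setT (EFin \o X) -> cond_indep_discrete P X V U ->
    P ([set t | U t = u] `&` [set t | V t = v]) != 0 ->
  \int[P]_(t in [set t | U t = u]) (X t)%:E =
    P [set t | U t = u] *
    cond_expectation P ([set t | U t = u] `&` [set t | V t = v]) X.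
Proof.
set Eu := [set t | U t = u]; set E := Eu `&` _.
move=> mU mV iX ciX PE0.
have mEu : measurable Eu := measurable_level_set u mU.
have mE : measurable E := measurableI _ _ mEu (measurable_level_set v mV).
have [fPEu fPE] := (fin_num_measure P _ mEu, fin_num_measure P _ mE).
have mX : measurable_fun setT X by apply/measurable_EFinP; exact: measurable_int iX.
have scaled : P Eu * \int[P]_(t in E) (X t)%:E = P E * \int[P]_(t in Eu) (X t)%:E.
  have := integral_scaled_laws (a := NngNum (fine_ge0 (measure_ge0 P Eu)))
    (b := NngNum (fine_ge0 (measure_ge0 P E))) mE mEu mX.
  rewrite /= !fineK//; apply; last 2 first.
  - exact: integrableS iX.
  - exact: integrableS iX.
  move=> A mA; rewrite muleC /E setIA setIAC.
  by rewrite (ciX u A [set v] mA (measurable_set1 v)) muleC [V @^-1` _ `&` _]setIC.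
rewrite /cond_expectation muleCA scaled.
rewrite muleA -{2}(fineK fPE) -EFinM mulVf ?mul1e//.
by rewrite fine_eq0.
Qed.

End conditioning_discrete.

Section covariance_indicators.
Local Open Scope ereal_scope.
Context d (T : measurableType d) (R : realType) (P : probability T R).

Lemma bernoulli_rv_ae_indic (U : T -> R) (p : R) :
  bernoulli_rv P U p -> U = \1_[set t | U t = 1%R] %[ae P].
Proof.
move=> [mU PU01 _].
have mU01 : measurable [set t | U t = 0%R \/ U t = 1%R].
  exact: measurableU (measurable_level_set 0 mU) (measurable_level_set 1 mU).
exists (~` [set t | U t = 0%R \/ U t = 1%R]); split.
- exact: measurableC.
- by rewrite probability_setC// PU01 subee.
- move=> t /= Ut_neq Ut01; apply: Ut_neq => _; rewrite indicE.
  case: Ut01 => Ut; last by rewrite mem_set.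
  by rewrite memNset //= Ut => /eqP; rewrite eq_sym oner_eq0.
Qed.

Lemma ae_eq_expectation (f g : T -> R) :
    measurable_fun setT f -> measurable_fun setT g -> f = g %[ae P] ->
  'E_P[f] = 'E_P[g].
Proof.
move=> mf mg fg; rewrite !expectation.unlock.
apply: ae_eq_integral => //; last exact: ae_eq_comp.
- exact/measurable_EFinP.
- exact/measurable_EFinP.
Qed.

Lemma ae_eq_covariance (X1 X2 Y1 Y2 : T -> R) :
    measurable_fun setT X1 -> measurable_fun setT X2 ->
    measurable_fun setT Y1 -> measurable_fun setT Y2 ->
    X1 = X2 %[ae P] -> Y1 = Y2 %[ae P] ->
  covariance P X1 Y1 = covariance P X2 Y2.
Proof.
move=> mX1 mX2 mY1 mY2 eX eY.
rewrite !covariance.unlock (ae_eq_expectation mX1 mX2 eX) (ae_eq_expectation mY1 mY2 eY).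
apply: ae_eq_expectation.
- by apply: measurable_funM; apply: measurable_funB.
- by apply: measurable_funM; apply: measurable_funB.
- apply: filterS2 eX eY => t /= + + _ => /(_ I) eXt /(_ I) eYt.
  by rewrite !fctE /= eXt eYt.
Qed.

Lemma covariance_bernoulli_mul (U V X Y : T -> R) (p q : R) :
    bernoulli_rv P U p -> bernoulli_rv P V q ->
    measurable_fun setT X -> measurable_fun setT Y ->
  covariance P (U \* X)%R (V \* Y)%R =
    covariance P (\1_[set t | U t = 1%R] \* X)%R (\1_[set t | V t = 1%R] \* Y)%R.
Proof.
move=> bU bV mX mY; have [[mU _ _] [mV _ _]] := (bU, bV).
apply: ae_eq_covariance.
- exact: measurable_funM.
- by apply: measurable_funM => //; exact/measurable_indic/measurable_level_set.
- exact: measurable_funM.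
- by apply: measurable_funM => //; exact/measurable_indic/measurable_level_set.
- exact/ae_eq_mul2r/bernoulli_rv_ae_indic/bU.
- exact/ae_eq_mul2r/bernoulli_rv_ae_indic/bV.
Qed.

Lemma Lfun1_indic_mul (mu : {measure set T -> \bar R}) (F : set T) (f : T -> R) :
  measurable F -> f \in Lfun mu 1 -> (\1_F \* f)%R \in Lfun mu 1.
Proof.
move=> mF /Lfun1_integrable if1; apply/Lfun1_integrable.
have mf : measurable_fun setT f by apply/measurable_EFinP; exact: measurable_int if1.
apply: le_integrable if1 => // [|t _].
  by apply/measurable_EFinP/measurable_funM => //; exact: measurable_indic.
rewrite lee_fin /= normrM ler_piMl// indicE.
by case: (t \in F); rewrite ?normr1 ?normr0.
Qed.

Lemma Lfun2_Lfun1 (f : T -> R) : f \in Lfun P 2%:E -> f \in Lfun P 1.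
Proof. by apply: Lfun_subset12; rewrite fin_num_measure. Qed.

Lemma expectation_indic_mul (F : set T) (f : T -> R) :
  'E_P[\1_F \* f] = \int[P]_(t in F) (f t)%:E.
Proof.
rewrite expectation.unlock [RHS]integral_mkcond epatch_indic.
by apply: eq_integral => t _; rewrite /= EFinM muleC.
Qed.

Lemma covariance_indic_mul (F G : set T) (X Y : T -> R) :
    measurable F -> measurable G -> X \in Lfun P 2%:E -> Y \in Lfun P 2%:E ->
  covariance P (\1_F \* X)%R (\1_G \* Y)%R =
    \int[P]_(t in F `&` G) (X t * Y t)%:E
    - \int[P]_(t in F) (X t)%:E * \int[P]_(t in G) (Y t)%:E.
Proof.
move=> mF mG X2 Y2.
have [X1 Y1] := (Lfun2_Lfun1 X2, Lfun2_Lfun1 Y2).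
have eFG : ((\1_F \* X) * (\1_G \* Y))%R = (\1_(F `&` G) \* (X \* Y))%R.
  by apply/funext => t; rewrite indicI fctE /=; ring.
have mFG : measurable (F `&` G) := measurableI _ _ mF mG.
rewrite covarianceE ?Lfun1_indic_mul// eFG ?Lfun1_indic_mul ?Lfun2_mul_Lfun1//.
by rewrite !expectation_indic_mul.
Qed.

End covariance_indicators.

Theorem mainTheorem11 (d : measure_display) (T : measurableType d) (R : realType)
  (P : probability T R) (U V X Y : T -> R) (p q : R) :
  0 < p <= 1 -> 0 < q <= 1 ->
  bernoulli_rv P U p -> bernoulli_rv P V q -> indep_rv P U V ->
  X \in Lfun P 2%:E -> Y \in Lfun P 2%:E ->
  cond_indep_discrete P X V U -> cond_indep_discrete P Y U V ->
  covariance P (U \* X)%R (V \* Y)%R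
  = ((p * q)%:E * cond_covariance P [set t | U t = 1%R /\ V t = 1%R] X Y)%E.
Proof.
move=> /andP[p0 _] /andP[q0 _] bU bV UV X2 Y2 ciX ciY.
have [[mU _ PU1] [mV _ PV1]] := (bU, bV).
have /Lfun1_integrable iX := Lfun2_Lfun1 X2.
have /Lfun1_integrable iY := Lfun2_Lfun1 Y2.
have /Lfun1_integrable iXY := Lfun2_mul_Lfun1 X2 Y2.
set S1 := [set t | U t = 1]; set S2 := [set t | V t = 1].
change [set t | U t = 1 /\ V t = 1] with (S1 `&` S2); set E := S1 `&` S2.
have PE : P E = (p * q)%:E.
  by rewrite EFinM -PU1 -PV1; exact: UV _ _ (measurable_set1 _) (measurable_set1 _).
have PE0 : P E != 0%E by rewrite PE eqe mulf_neq0 ?gt_eqF.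
have [mS1 mS2] := (measurable_level_set 1 mU, measurable_level_set 1 mV).
have mE : measurable E := measurableI _ _ mS1 mS2.
have [/measurable_EFinP mX /measurable_EFinP mY] := (measurable_int _ iX, measurable_int _ iY).
rewrite (covariance_bernoulli_mul bU bV mX mY) covariance_indic_mul//.
have hX := cond_indep_discrete_integral (u := 1) (v := 1) mU mV iX ciX PE0.
have hY := cond_indep_discrete_integral (u := 1) (v := 1) mV mU iY ciY.
rewrite setIC in hY.
rewrite (integral_cond_expectation _ mE PE0) hX (hY PE0).
rewrite /cond_covariance PE PU1 PV1.
rewrite -(fineK (cond_expectation_fin_num mE iX)) -(fineK (cond_expectation_fin_num mE iY)).
rewrite -(fineK (cond_expectation_fin_num mE iXY)).
by rewrite -!EFinM -!EFinB -?EFinM; congr EFin; ring.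
Qed.
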